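(* Consider the following data. For $i=1,\dots,n_z$ and $j=1,\dots,n_u$ let $A_{c,ij}\in\mathbb{R}^{n_{ij}\times n_{ij}}$ and delays $\tau_{ij}\ge0$ be given, let $T_s>0$, and write $\tau_{ij}/T_s=m_{ij}-v_{ij}$ with $m_{ij}\in\mathbb{Z}_{\ge0}$ and $0\le v_{ij}<1$. Let $A_c=\mathrm{diag}(A_{c,11},A_{c,21},\dots,A_{c,n_zn_u})\in\mathbb{R}^{n_x\times n_x}$ and $V=\mathrm{diag}(v_{11}I_{n_{11}},v_{21}I_{n_{21}},\dots,v_{n_zn_u}I_{n_{n_zn_u}})$. Let $\bar m=\max_{ij}m_{ij}$, $n_{\tilde u}=(\bar m+1)n_u$, and let $B_{1c},B_{2c}\in\mathbb{R}^{n_x\times n_{\tilde u}}$, $C_c\in\mathbb{R}^{n_z\times n_x}$, $D_o\in\mathbb{R}^{n_z\times n_{\tilde u}}$ be the matrices of the delayed system (constructed as in the context). Let $Q_c\in\mathbb{R}^{n_z\times n_z}$ be symmetric positive semidefinite and $\mu>0$. Put $n_{xu}=n_x+n_{\tilde u}$, $I_{xu}$ the $n_{xu}\times n_{xu}$ identity, $I_h=\mathrm{diag}(I_{xu},I_{xu},I_{xu})$, $\bar B_{2c}=V(B_{2c}-B_{1c})$, $$H_{1c}=\begin{bmatrix}A_c&B_{1c}\\0&0\end{bmatrix},\ H_{2c}=\begin{bmatrix}VA_c&\bar B_{2c}\\0&0\end{bmatrix},\ H_{3c}=\begin{bmatrix}VA_c&0\\0&0\end{bmatrix},\ H_c=\mathrm{diag}(H_{1c},H_{2c},H_{3c}),$$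 $H_{cq}=H_c-\tfrac{\mu}{2}I_h$, $H_{cm}=H_c-\mu I_h$, $E_1=[I_{xu},\,I_{xu},\,-I_{xu}]$, $E_2=[I_{xu};I_{xu};I_{xu}]$, $\bar M_c=-\begin{bmatrix}C_c&D_o\end{bmatrix}'Q_c$, $\bar Q_c=-\bar M_c\begin{bmatrix}C_c&D_o\end{bmatrix}$. Let $A(t),A_v(t),B_1(t),B_2(t),H_q(t),H_m(t),Q(t),M(t)$, $t\in[0,T_s]$, solve $$\dot A=A_cA,\ A(0)=I;\quad \dot A_v=VA_cA_v,\ A_v(0)=I;\quad \dot B_1=A(t)B_{1c},\ B_1(0)=0;\quad \dot B_2=A_v(t)\bar B_{2c},\ B_2(0)=0;$$ $$\dot H_q=H_{cq}H_q,\ H_q(0)=I_h;\quad \dot H_m=H_{cm}H_m,\ H_m(0)=I_h;$$ $$\dot Q=\Gamma_q(t)'\bar Q_c\Gamma_q(t),\ Q(0)=0;\quad \dot M=\Gamma_m(t)'\bar M_c,\ M(0)=0,$$ where $\Gamma_q(t)=E_1H_q(t)E_2$ and $\Gamma_m(t)=E_1H_m(t)E_2$. Then $A=A(T_s)$, $B_o=B_1(T_s)+B_2(T_s)$, $Q=Q(T_s)$, $M=M(T_s)$ are the discrete-time matrices of the discounted LQ optimal control problem with time delays, namely $$A=e^{A_cT_s},\qquad B_o=\int_0^{T_s}e^{A_ct}B_{1c}\,dt+V\int_0^{T_s}e^{VA_ct}(B_{2c}-B_{1c})\,dt,$$ $$Q=\int_0^{T_s}e^{-\mu s}\Gamma(s)'\bar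 Q_c\Gamma(s)\,ds,\qquad M=\int_0^{T_s}e^{-\mu s}\Gamma(s)'\bar M_c\,ds,$$ where $\Gamma(s)=\begin{bmatrix}e^{A_cs}&B_o(s)\\0&I\end{bmatrix}$ with $B_o(s)=\int_0^{s}e^{A_cr}B_{1c}\,dr+V\int_0^{s}e^{VA_cr}(B_{2c}-B_{1c})\,dr$.
   Context: Time-delay MIMO system: for $i=1,\dots,n_z$, $j=1,\dots,n_u$, the SISO subsystem from input $j$ to output $i$ is $\dot x_{ij}(t)=A_{c,ij}x_{ij}(t)+B_{c,ij}u_j(t-\tau_{ij})$, $z_{ij}(t)=C_{c,ij}x_{ij}(t)+D_{c,ij}u_j(t-\tau_{ij})$, with $B_{c,ij}\in\mathbb{R}^{n_{ij}\times1}$, $C_{c,ij}\in\mathbb{R}^{1\times n_{ij}}$, $D_{c,ij}\in\mathbb{R}$; the full state is $x=[x_{11};x_{21};\dots;x_{n_zn_u}]\in\mathbb{R}^{n_x}$, input $u=[u_1;\dots;u_{n_u}]$, output $z=[z_1;\dots;z_{n_z}]$ with $z_i=\sum_j z_{ij}$. Inputs are piecewise constant, $u(t)=u_k$ on $[t_k,t_{k+1})$, $t_k=t_0+kT_s$, and the augmented input is $\tilde u_k=[u_{k-\bar m};\dots;u_{k-1};u_k]\in\mathbb{R}^{(\bar m+1)n_u}$. Let $e_j\in\mathbb{R}^{1\times n_u}$ be the $j$-th unit row vector and $E^p_{\bar m+1}\in\mathbb{R}^{n_u\times(\bar m+1)n_u}$ the block row whose $p$-th block is $I_{n_u}$ and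 others zero ($p=1,\dots,\bar m+1$). Then $B_{1c}=[B_{1c,11};B_{1c,21};\dots;B_{1c,n_zn_u}]$ with $B_{1c,ij}=B_{c,ij}e_jE^{m_{ij}}_{\bar m+1}$, $B_{2c}=[B_{2c,11};\dots;B_{2c,n_zn_u}]$ with $B_{2c,ij}=B_{c,ij}e_jE^{m_{ij}+1}_{\bar m+1}$; $C_c=[\bar C_1,\dots,\bar C_{n_u}]$ with $\bar C_j=\mathrm{diag}(C_{c,1j},\dots,C_{c,n_zj})$; $D_o=[\bar D_1;\dots;\bar D_{n_z}]$ with $\bar D_i=\sum_{j}D_{c,ij}e_jE^{m_{ij}}_{\bar m+1}$. In the discrete-time equivalent, the augmented state $\tilde x_k=[x_k;\,u_{k-\bar m};\dots;u_{k-1}]$ evolves with blocks of $A$ and $B_o$, and the stage costs have the form $\tfrac12[\tilde x_k;u_k]'e^{-\mu t_k}Q[\tilde x_k;u_k]+(e^{-\mu t_k}M\bar z_k)'[\tilde x_k;u_k]+\rho_k$ for the discounted cost $\int \tfrac12 e^{-\mu t}(z-\bar z)'Q_c(z-\bar z)\,dt$. A prime denotes transpose. *)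

From HB Require Import structures.
From mathcomp Require Import all_boot all_order all_algebra.
From mathcomp Require Import all_classical all_reals all_analysis.
Set Implicit Arguments. Unset Strict Implicit. Unset Printing Implicit Defensive.
Import Order.TTheory GRing.Theory Num.Theory.
Import numFieldNormedType.Exports.
Local Open Scope classical_set_scope.
Local Open Scope ring_scope.

Definition expmx (R : realType) (n : nat) (A : 'M[R]_n) : 'M[R]_n :=
  limn (series (fun k : nat => (k`!%:R)^-1 *: A ^+ k)).

Definition mxint (R : realType) (p q : nat) (f : R -> 'M[R]_(p, q)) (a b : R)
  : 'M[R]_(p, q) :=
  \matrix_(i, j) (\int[@lebesgue_measure R]_(t in `[a, b]) f t i j).

Definition solves_on (R : realType) (p q : nat) (T : R)
  (F : R -> 'M[R]_(p, q)) (G : R -> 'M[R]_(p, q)) : Prop :=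
  {within `[0, T], continuous F} /\
  (forall t : R, 0 < t < T -> is_derive t 1 F (G t)).

(** Blocks are indexed by k : 'I_(nz * nu), k <-> (i, j) (0-based) with
    k = i + nz * j, i.e. the order 11, 21, ..., nz 1, 12, ..., nz nu. *)
Definition iof (nz k : nat) : nat := (k %% nz)%N.
Definition jof (nz k : nat) : nat := (k %/ nz)%N.

Definition erow (R : realType) (nu j : nat) : 'rV[R]_nu :=
  \row_(l < nu) (l == j :> nat)%:R.

(** E^p_{mbar+1} : block row with p-th block (1-based) I_nu, zeros elsewhere
    (the zero block row when p is out of range 1..mbar+1). *)
Definition Eblk (R : realType) (nu mbar p : nat) : 'M[R]_(nu, mbar.+1 * nu) :=
  \matrix_(r < nu, c < mbar.+1 * nu) ((((c %/ nu)%N.+1 == p) && ((c %% nu)%N == r :> nat)))%:R.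

Definition ecol (R : realType) (nz i : nat) : 'cV[R]_nz :=
  \col_(r < nz) (r == i :> nat)%:R.

Definition mbar_of (K : nat) (m : 'I_K -> nat) : nat := \max_(k < K) m k.

Definition Ac_of (R : realType) (K : nat) (n : 'I_K -> nat)
  (Acb : forall k, 'M[R]_(n k)) : 'M[R]_(\sum_(k < K) n k) :=
  \mxdiag_(k < K) Acb k.

Definition V_of (R : realType) (K : nat) (n : 'I_K -> nat) (v : 'I_K -> R)
  : 'M[R]_(\sum_(k < K) n k) :=
  \mxdiag_(k < K) ((v k)%:M : 'M[R]_(n k)).

Definition B1c_of (R : realType) (nz nu : nat) (n : 'I_(nz * nu) -> nat)
  (Bc : forall k, 'cV[R]_(n k)) (m : 'I_(nz * nu) -> nat)
  : 'M[R]_(\sum_(k < nz * nu) n k, (mbar_of m).+1 * nu) :=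
  \mxcol_(k < nz * nu) (Bc k *m erow R nu (jof nz k) *m Eblk R nu (mbar_of m) (m k)).

Definition B2c_of (R : realType) (nz nu : nat) (n : 'I_(nz * nu) -> nat)
  (Bc : forall k, 'cV[R]_(n k)) (m : 'I_(nz * nu) -> nat)
  : 'M[R]_(\sum_(k < nz * nu) n k, (mbar_of m).+1 * nu) :=
  \mxcol_(k < nz * nu) (Bc k *m erow R nu (jof nz k) *m Eblk R nu (mbar_of m) (m k).+1).

(** C_c = [Cbar_1, ..., Cbar_nu], Cbar_j = diag(C_{c,1j}, ..., C_{c,nz j}) *)
Definition Cc_of (R : realType) (nz nu : nat) (n : 'I_(nz * nu) -> nat)
  (Cc : forall k, 'rV[R]_(n k)) : 'M[R]_(nz, \sum_(k < nz * nu) n k) :=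
  \mxrow_(k < nz * nu) (ecol R nz (iof nz k) *m Cc k).

(** D_o = [Dbar_1; ...; Dbar_nz], Dbar_i = sum_j D_{c,ij} e_j E^{m_ij} *)
Definition Do_of (R : realType) (nz nu : nat) (Dc : 'I_(nz * nu) -> R)
  (m : 'I_(nz * nu) -> nat) : 'M[R]_(nz, (mbar_of m).+1 * nu) :=
  \sum_(k < nz * nu)
     ecol R nz (iof nz k) *m (Dc k *: (erow R nu (jof nz k) *m Eblk R nu (mbar_of m) (m k))).

Section Generic.
Variables (R : realType) (nx nut : nat).

Definition H1c (Ac : 'M[R]_nx) (B1 : 'M[R]_(nx, nut)) : 'M[R]_(nx + nut) :=
  block_mx Ac B1 0 0.
Definition H2c (Ac V : 'M[R]_nx) (B1 B2 : 'M[R]_(nx, nut)) : 'M[R]_(nx + nut) :=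
  block_mx (V *m Ac) (V *m (B2 - B1)) 0 0.
Definition H3c (Ac V : 'M[R]_nx) : 'M[R]_(nx + nut) :=
  block_mx (V *m Ac) 0 0 0.
Definition Hc (Ac V : 'M[R]_nx) (B1 B2 : 'M[R]_(nx, nut))
  : 'M[R]_((nx + nut) + (nx + nut) + (nx + nut)) :=
  block_mx (block_mx (H1c Ac B1) 0 0 (H2c Ac V B1 B2)) 0 0 (H3c Ac V).

Definition E1 : 'M[R]_(nx + nut, (nx + nut) + (nx + nut) + (nx + nut)) :=
  row_mx (row_mx 1%:M 1%:M) (- 1%:M).
Definition E2 : 'M[R]_((nx + nut) + (nx + nut) + (nx + nut), nx + nut) :=
  col_mx (col_mx 1%:M 1%:M) 1%:M.

Definition Mbarc (nz : nat) (Cc : 'M[R]_(nz, nx)) (Do : 'M[R]_(nz, nut))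
  (Qc : 'M[R]_nz) : 'M[R]_(nx + nut, nz) :=
  - ((row_mx Cc Do)^T *m Qc).
Definition Qbarc (nz : nat) (Cc : 'M[R]_(nz, nx)) (Do : 'M[R]_(nz, nut))
  (Qc : 'M[R]_nz) : 'M[R]_(nx + nut) :=
  - (Mbarc Cc Do Qc *m row_mx Cc Do).

Definition Bo_s (Ac V : 'M[R]_nx) (B1 B2 : 'M[R]_(nx, nut)) (s : R)
  : 'M[R]_(nx, nut) :=
  mxint (fun r => expmx (r *: Ac) *m B1) 0 s
  + V *m mxint (fun r => expmx (r *: (V *m Ac)) *m (B2 - B1)) 0 s.

Definition Gam (Ac V : 'M[R]_nx) (B1 B2 : 'M[R]_(nx, nut)) (s : R)
  : 'M[R]_(nx + nut) :=
  block_mx (expmx (s *: Ac)) (Bo_s Ac V B1 B2 s) 0 1%:M.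

End Generic.

(* Every matrix ODE in the statement is linear with constant coefficients, so
   on [0, Ts] its solution is unique: d/dt (e^{-tA} F(t)) = 0 forces
   F(t) = e^{tA} F(0). This identifies A(t) = e^{A_c t} and A_v(t) = e^{V A_c t},
   and the fundamental theorem of calculus identifies B_1 and B_2 with the two
   integrals of B_o(t); V commutes with A_c because V is blockwise scalar.
   For H_q and H_m one guesses the solution e^{-ct} diag(Phi_1, Phi_2, Phi_3),
   with Phi_1 = [A, B_1; 0, I], Phi_2 = [A_v, B_2; 0, I] and Phi_3 = [A_v, 0; 0, I]:
   it solves the same ODE because A_c B_1(t) + B_1c = A(t) B_1c (and likewise for
   B_2), and E_1 diag(Phi_1, Phi_2, Phi_3) E_2 = Phi_1 + Phi_2 - Phi_3 = Gamma(t).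
   Hence Gamma_q = e^{-mu t/2} Gamma and Gamma_m = e^{-mu t} Gamma, and Q and M
   are obtained by integrating their ODEs. *)

From HB Require Import structures.
From mathcomp Require Import all_boot all_order all_algebra.
From mathcomp Require Import all_classical all_reals all_analysis.
From mathcomp Require Import ring.
Set Implicit Arguments. Unset Strict Implicit. Unset Printing Implicit Defensive.
Import Order.TTheory GRing.Theory Num.Theory.
Import numFieldNormedType.Exports.
Local Open Scope classical_set_scope.
Local Open Scope ring_scope.

Section matrix_valued_functions.
Context {R : realType}.

Lemma cvg_mxP {T : Type} (F : set_system T) {FF : Filter F} m n
    (f : T -> 'M[R]_(m, n)) (l : 'M[R]_(m, n)) :
  f @ F --> l <-> forall i j, (fun x => f x i j) @ F --> l i j.
Proof.
split=> [fl i j|fl].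
  exact: (continuous_cvg _ (@coord_continuous R m n i j l) fl).
apply/cvgrPdist_le => /= e e0; near=> x.
rewrite [leLHS]/Num.Def.normr/= mx_normrE (bigmax_le _ (ltW e0))//= => -[i j] _.
rewrite !mxE/=; move: i j; near: x.
apply: filter_forall => /= i; apply: filter_forall => /= j.
exact: ((cvgrPdist_le _ _).1 (fl i j)).
Unshelve. all: by end_near. Qed.

Lemma continuous_within_mxP m n (A : set R) (F : R -> 'M[R]_(m, n)) :
  {within A, continuous F} <->
  forall i j, {within A, continuous (fun s => F s i j)}.
Proof.
split=> [cF i j x|cF x]; first by have /cvg_mxP := cF x; apply.
by apply/cvg_mxP => i j; exact: cF.
Qed.

Lemma is_derive_mxP m n (F : R -> 'M[R]_(m, n)) (t : R) (D : 'M[R]_(m, n)) :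
  is_derive t 1 F D <-> forall i j, is_derive t 1 (fun s => F s i j) (D i j).
Proof.
split=> [[dF <-] i j|dF].
  have dFij := (derivable_mxP F t 1).1 dF i j.
  by apply: DeriveDef => //; rewrite derive_mx // mxE.
have dFt : derivable F t 1 by apply/derivable_mxP => i j; case: (dF i j).
apply: DeriveDef => //; rewrite derive_mx //.
by apply/matrixP => i j; rewrite mxE; case: (dF i j).
Qed.

Lemma is_derive_ext {V : normedModType R} (f g : R -> V) (t : R) (d : V) :
  f =1 g -> is_derive t 1 f d -> is_derive t 1 g d.
Proof. by move=> /funext <-. Qed.

Lemma cvg_mulmx {T : Type} (F : set_system T) {FF : Filter F} m n p
    (f : T -> 'M[R]_(m, n)) (g : T -> 'M[R]_(n, p)) (a : 'M[R]_(m, n))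
    (b : 'M[R]_(n, p)) :
  f @ F --> a -> g @ F --> b -> (fun x => f x *m g x) @ F --> a *m b.
Proof.
move=> /cvg_mxP fa /cvg_mxP gb; apply/cvg_mxP => i j; rewrite mxE.
under eq_cvg do rewrite mxE.
by apply: cvg_big => //; [exact: add_continuous | move=> k _; exact: cvgM].
Qed.

Lemma cvg_trmx {T : Type} (F : set_system T) {FF : Filter F} m n
    (f : T -> 'M[R]_(m, n)) (a : 'M[R]_(m, n)) :
  f @ F --> a -> (fun x => (f x)^T) @ F --> a^T.
Proof.
move=> /cvg_mxP fa; apply/cvg_mxP => i j; rewrite mxE.
by under eq_cvg do rewrite mxE; exact: fa.
Qed.

Lemma cvg_block_mx {T : Type} (F : set_system T) {FF : Filter F} m1 m2 n1 n2
    (f1 : T -> 'M[R]_(m1, n1)) (f2 : T -> 'M[R]_(m1, n2))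
    (f3 : T -> 'M[R]_(m2, n1)) (f4 : T -> 'M[R]_(m2, n2))
    (a1 : 'M[R]_(m1, n1)) (a2 : 'M[R]_(m1, n2))
    (a3 : 'M[R]_(m2, n1)) (a4 : 'M[R]_(m2, n2)) :
  f1 @ F --> a1 -> f2 @ F --> a2 -> f3 @ F --> a3 -> f4 @ F --> a4 ->
  (fun x => block_mx (f1 x) (f2 x) (f3 x) (f4 x)) @ F --> block_mx a1 a2 a3 a4.
Proof.
move=> /cvg_mxP c1 /cvg_mxP c2 /cvg_mxP c3 /cvg_mxP c4; apply/cvg_mxP => i j.
case: (split_ordP i) => {}i ->; case: (split_ordP j) => {}j ->.
- by rewrite block_mxEul; under eq_cvg do rewrite block_mxEul; exact: c1.
- by rewrite block_mxEur; under eq_cvg do rewrite block_mxEur; exact: c2.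
- by rewrite block_mxEdl; under eq_cvg do rewrite block_mxEdl; exact: c3.
- by rewrite block_mxEdr; under eq_cvg do rewrite block_mxEdr; exact: c4.
Qed.

Lemma is_derive_mulmx m n p (F : R -> 'M[R]_(m, n)) (G : R -> 'M[R]_(n, p))
    (t : R) dF dG :
  is_derive t 1 F dF -> is_derive t 1 G dG ->
  is_derive t 1 (fun s => F s *m G s) (dF *m G t + F t *m dG).
Proof.
move=> /is_derive_mxP dF' /is_derive_mxP dG'; apply/is_derive_mxP => i j.
apply: (@is_derive_ext _ (fun s => \sum_k F s i k * G s k j)).
  by move=> s; rewrite mxE.
have := is_derive_sum (fun k => is_deriveM (dF' i k) (dG' k j)).
rewrite fct_sumE => /is_derive_eq; apply.
rewrite !mxE -big_split; apply: eq_bigr => k _.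
by rewrite addrC [_ *: dF i k]mulrC.
Qed.

Lemma is_derive_scale_fun m n (k : R -> R) (F : R -> 'M[R]_(m, n)) (t : R) dk dF :
  is_derive t 1 k dk -> is_derive t 1 F dF ->
  is_derive t 1 (fun s => k s *: F s) (dk *: F t + k t *: dF).
Proof.
move=> dk' /is_derive_mxP dF'; apply/is_derive_mxP => i j.
apply: (@is_derive_ext _ (fun s => k s * F s i j)); first by move=> s; rewrite mxE.
have /is_derive_eq := is_deriveM dk' (dF' i j); apply.
by rewrite !mxE addrC [_ *: dk]mulrC.
Qed.

Lemma is_derive_block_mx m1 m2 n1 n2 (F1 : R -> 'M[R]_(m1, n1))
    (F2 : R -> 'M[R]_(m1, n2)) (F3 : R -> 'M[R]_(m2, n1))
    (F4 : R -> 'M[R]_(m2, n2)) (t : R) d1 d2 d3 d4 :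
  is_derive t 1 F1 d1 -> is_derive t 1 F2 d2 ->
  is_derive t 1 F3 d3 -> is_derive t 1 F4 d4 ->
  is_derive t 1 (fun s => block_mx (F1 s) (F2 s) (F3 s) (F4 s))
    (block_mx d1 d2 d3 d4).
Proof.
move=> /is_derive_mxP D1 /is_derive_mxP D2 /is_derive_mxP D3 /is_derive_mxP D4.
apply/is_derive_mxP => i j.
case: (split_ordP i) => {}i ->; case: (split_ordP j) => {}j ->.
- by rewrite block_mxEul; apply: is_derive_ext (D1 i j) => s; rewrite block_mxEul.
- by rewrite block_mxEur; apply: is_derive_ext (D2 i j) => s; rewrite block_mxEur.
- by rewrite block_mxEdl; apply: is_derive_ext (D3 i j) => s; rewrite block_mxEdl.
- by rewrite block_mxEdr; apply: is_derive_ext (D4 i j) => s; rewrite block_mxEdr.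
Qed.

End matrix_valued_functions.

Section integration_on_segments.
Context {R : realType}.
Implicit Types (a b t T : R).

Lemma is_derive0_itv_cst T m n (F : R -> 'M[R]_(m, n)) :
  {within `[0, T], continuous F} ->
  (forall t, 0 < t < T -> is_derive t 1 F 0) ->
  forall t, 0 <= t <= T -> F t = F 0.
Proof.
move=> cF dF t /andP[]; rewrite le_eqVlt => /predU1P[<- //|t0 tT].
apply/matrixP => i j; apply/eqP; rewrite -subr_eq0; apply/eqP.
have [||c _ ->] := @MVT R (fun s => F s i j) (fun _ => 0) 0 t t0.
- move=> s; rewrite in_itv /= => /andP[s0 st].
  have := dF s; rewrite s0 (lt_le_trans st tT) => /(_ isT) /is_derive_mxP.
  by move=> /(_ i j); rewrite mxE.
- apply: continuous_subspaceW ((continuous_within_mxP _ _).1 cF i j).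
  by apply: subset_itvl; rewrite bnd_simp.
- by rewrite mul0r.
Qed.

Lemma eq_mxint p q (f g : R -> 'M[R]_(p, q)) a b :
  (forall t, a <= t <= b -> f t = g t) -> mxint f a b = mxint g a b.
Proof.
move=> fg; apply/matrixP => i j; rewrite !mxE; apply: eq_Rintegral => x.
by rewrite inE /= in_itv /= => /fg ->.
Qed.

Lemma mxint_itvxx p q (f : R -> 'M[R]_(p, q)) a : mxint f a a = 0.
Proof. by apply/matrixP => i j; rewrite !mxE set_itv1 Rintegral_set1. Qed.

Lemma Rintegral_itv_sum a b (I : Type) (r : seq I) (f : I -> R -> R) :
  (forall k, {within `[a, b], continuous (f k)}) ->
  \int[lebesgue_measure]_(x in `[a, b]) (\sum_(k <- r) f k x) =
  \sum_(k <- r) \int[lebesgue_measure]_(x in `[a, b]) f k x.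
Proof.
have integrable g : {within `[a, b], continuous g} ->
    lebesgue_measure.-integrable `[a, b] (EFin \o g).
  by apply: continuous_compact_integrable; exact: segment_compact.
move=> cf; elim: r => [|k r IH].
  rewrite big_nil; under eq_Rintegral do rewrite big_nil.
  by rewrite Rintegral_cst ?mul0r.
rewrite big_cons; under eq_Rintegral do rewrite big_cons.
rewrite RintegralD ?IH //; first exact: integrable.
apply: integrable => x; apply: cvg_big => //; first exact: add_continuous.
by move=> k' _; exact: cf.
Qed.

Lemma mxint_mulmxl p q r (M : 'M[R]_(p, q)) (g : R -> 'M[R]_(q, r)) a b :
  {within `[a, b], continuous g} ->
  mxint (fun t => M *m g t) a b = M *m mxint g a b.
Proof.
move=> /continuous_within_mxP cg; apply/matrixP => i j; rewrite !mxE.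
under eq_Rintegral do rewrite mxE.
rewrite Rintegral_itv_sum; last first.
  by move=> k x; apply: cvgM; [exact: cvg_cst | exact: cg].
apply: eq_bigr => k _; rewrite mxE RintegralZl //.
by apply: continuous_compact_integrable; [exact: segment_compact | exact: cg].
Qed.

Lemma solves_onE T p q (F G : R -> 'M[R]_(p, q)) :
  solves_on T F G -> {within `[0, T], continuous G} ->
  forall t, 0 <= t <= T -> F t = F 0 + mxint G 0 t.
Proof.
move=> [cF dF] cG t t_itv; suff -> : mxint G 0 t = F t - F 0 by rewrite addrC subrK.
move: t_itv => /andP[]; rewrite le_eqVlt => /predU1P[<- _|t0 tT].
  by rewrite mxint_itvxx subrr.
have sub0t : `[0, t] `<=` `[0, T] by apply: subset_itvl; rewrite bnd_simp.
apply/matrixP => i j; rewrite !mxE.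
have cFij := continuous_subspaceW sub0t ((continuous_within_mxP _ _).1 cF i j).
have cGij := continuous_subspaceW sub0t ((continuous_within_mxP _ _).1 cG i j).
have dFij x : 0 < x < t -> is_derive x 1 (fun s => F s i j) (G x i j).
  move=> /andP[x0 xt]; have := dF x; rewrite x0 (lt_le_trans xt tT).
  by move=> /(_ isT) /is_derive_mxP; apply.
have [_ cF0 cFt] := (continuous_within_itvP _ t0).1 cFij.
rewrite /Rintegral
  (@continuous_FTC2 R (fun s => G s i j) (fun s => F s i j) 0 t) //.
  by split=> // x; rewrite in_itv /= => /dFij [].
by move=> x; rewrite in_itv /= => /dFij dx; rewrite derive1E derive_val.
Qed.

End integration_on_segments.

Section exp_dominated_pseries.
Context {R : realType}.
Implicit Types (C b x : R) (c : R^nat).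

Lemma cvg_pseries_exp_dominated C b c x :
  0 <= C -> 0 <= b -> (forall k, `|c k| <= C * (b ^+ k / k`!%:R)) ->
  cvgn (pseries c x).
Proof.
move=> C0 b0 c_le; apply: normed_cvg.
apply: (@series_le_cvg _ _ (fun k => C * ((b * `|x|) ^+ k / k`!%:R))) => [k|k|k|].
- by rewrite /=.
- by rewrite mulr_ge0 // divr_ge0 // exprn_ge0 // mulr_ge0.
- rewrite /= normrM normrX exprMn mulrAC mulrA.
  by apply: ler_wpM2r; [rewrite exprn_ge0 | exact: c_le].
- exact/is_cvg_seriesZ/is_cvg_series_exp_coeff.
Qed.

Lemma pseries_diffs_exp_dominated C b c :
  (forall k, `|c k| <= C * (b ^+ k / k`!%:R)) ->
  forall k, `|pseries_diffs c k| <= (C * b) * (b ^+ k / k`!%:R).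
Proof.
move=> c_le k; have k1_gt0 : 0 < k.+1%:R :> R by rewrite ltr0n.
rewrite /pseries_diffs normrM normr_nat.
have := c_le k.+1; rewrite -(ler_pM2l k1_gt0) => /le_trans; apply.
rewrite le_eqVlt; apply/orP; left; apply/eqP.
rewrite factS natrM invfM exprS; field.
by rewrite pnatr_eq0 -lt0n fact_gt0 paddr_eq0 // oner_eq0.
Qed.

Lemma is_derive_pseries_exp_dominated C b c x :
  0 <= C -> 0 <= b -> (forall k, `|c k| <= C * (b ^+ k / k`!%:R)) ->
  is_derive x 1 (fun y => limn (pseries c y)) (limn (pseries (pseries_diffs c) x)).
Proof.
move=> C0 b0 c_le; have Cb0 : 0 <= C * b by rewrite mulr_ge0.
have dc_le := pseries_diffs_exp_dominated c_le.
have ddc_le := pseries_diffs_exp_dominated dc_le.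
apply: (@pseries_snd_diffs _ _ (`|x| + 1)).
- exact: cvg_pseries_exp_dominated C0 b0 c_le.
- exact: cvg_pseries_exp_dominated Cb0 b0 dc_le.
- exact: cvg_pseries_exp_dominated (mulr_ge0 Cb0 b0) b0 ddc_le.
- by rewrite [ltRHS]ger0_norm ?ltrDl // addr_ge0.
Qed.

Lemma lim_pseries_lincomb (I : finType) (a : I -> R) (c : I -> R^nat) x :
  (forall l, cvgn (pseries (c l) x)) ->
  limn (pseries (fun k => \sum_l a l * c l k) x) =
  \sum_l a l * limn (pseries (c l) x).
Proof.
move=> cvg_c; apply: cvg_lim => //.
suff -> : pseries (fun k => \sum_l a l * c l k) x =
    fun N => \sum_l a l * pseries (c l) x N.
  apply: cvg_big => //; first exact: add_continuous.
  by move=> l _; apply: cvgM; [exact: cvg_cst | exact: cvg_c].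
apply/funext => N; rewrite /pseries /series /=.
under eq_bigr do rewrite mulr_suml.
rewrite exchange_big /=; apply: eq_bigr => l _.
by rewrite mulr_sumr; apply: eq_bigr => k _; rewrite mulrA.
Qed.

End exp_dominated_pseries.

Section matrix_exponential.
Context {R : realType} {n : nat}.
Implicit Types A B : 'M[R]_n.

Definition expmx_coef A (i j : 'I_n) (k : nat) : R := (k`!%:R)^-1 * (A ^+ k) i j.

Lemma expmx_coef_exp_dominated A i j k :
  `|expmx_coef A i j k| <= 1 * ((n%:R * `|A|) ^+ k / k`!%:R).
Proof.
have entry_le (M : 'M[R]_n) l l' : `|M l l'| <= `|M|.
  rewrite [leRHS]/Num.Def.normr /= mx_normrE.
  exact: le_trans (le_bigmax _ _ (l, l')).
have powmx_le l : `|(A ^+ l) i j| <= (n%:R * `|A|) ^+ l.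
  elim: l i j => [|l IH] i' j'.
    by rewrite !expr0 mxE; case: (i' == j'); rewrite ?normr1 ?normr0.
  rewrite exprS -mulmxE mxE; apply: le_trans (ler_norm_sum _ _ _) _.
  apply: le_trans (_ : \sum_(l' < n) `|A| * (n%:R * `|A|) ^+ l <= _).
    by apply: ler_sum => l' _; rewrite normrM ler_pM ?entry_le ?IH.
  by rewrite sumr_const card_ord -[_ *+ n]mulr_natl exprS mulrA.
rewrite mul1r /expmx_coef normrM mulrC [`|_^-1|]ger0_norm ?invr_ge0 //.
by apply: ler_wpM2r; rewrite ?invr_ge0 ?powmx_le.
Qed.

Lemma cvg_pseries_expmx_coef A i j x : cvgn (pseries (expmx_coef A i j) x).
Proof.
by apply: cvg_pseries_exp_dominated _ _ (@expmx_coef_exp_dominated A i j);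
  rewrite ?mulr_ge0.
Qed.

Lemma expmxE A (t : R) :
  expmx (t *: A) = \matrix_(i, j) limn (pseries (expmx_coef A i j) t).
Proof.
have scaleX k : (t *: A) ^+ k = t ^+ k *: A ^+ k.
  elim: k => [|k IH]; first by rewrite !expr0 scale1r.
  by rewrite !exprS -!mulmxE IH -scalemxAl -scalemxAr scalerA.
apply: cvg_lim => //; apply/cvg_mxP => i j; rewrite mxE.
suff -> : (fun N => series (fun k => (k`!%:R)^-1 *: (t *: A) ^+ k) N i j) =
    pseries (expmx_coef A i j) t by exact: cvg_pseries_expmx_coef.
apply/funext => N; rewrite /series /pseries /= summxE; apply: eq_bigr => k _.
by rewrite scaleX !mxE /expmx_coef -mulrA [t ^+ k * _]mulrC.
Qed.

Lemma expmx_commute A B (t : R) :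
  A *m B = B *m A -> expmx (t *: A) *m B = B *m expmx (t *: A).
Proof.
move=> AB; rewrite expmxE; apply/matrixP => i j; rewrite !mxE.
under eq_bigr do rewrite mxE mulrC.
under [RHS]eq_bigr do rewrite mxE.
rewrite -!lim_pseries_lincomb; try by move=> l; exact: cvg_pseries_expmx_coef.
congr (limn (pseries _ t)); apply/funext => k.
have /matrixP/(_ i j) : A ^+ k *m B = B *m A ^+ k.
  by rewrite !mulmxE; apply/esym/commrX; rewrite /GRing.comm -!mulmxE AB.
rewrite !mxE /expmx_coef => ABk.
under eq_bigr do rewrite mulrCA.
under [RHS]eq_bigr do rewrite mulrCA.
rewrite -!mulr_sumr -ABk; congr (_ * _).
by apply: eq_bigr => l _; rewrite mulrC.
Qed.

Lemma expmx0 A : expmx (0 *: A) = 1%:M.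
Proof.
rewrite expmxE; apply/matrixP => i j; rewrite !mxE.
apply: lim_near_cst => //; near=> N; rewrite -[N]prednK; last by near: N.
rewrite /pseries /series /= big_nat_recl //= big1 => [|k _]; last first.
  by rewrite expr0n /= mulr0.
by rewrite /expmx_coef !expr0 mulr1 fact0 invr1 mul1r mxE addr0.
Unshelve. all: by end_near. Qed.

Lemma is_derive_expmx A (t : R) :
  is_derive t 1 (fun s => expmx (s *: A)) (A *m expmx (t *: A)).
Proof.
apply: (@is_derive_ext _ _
    (fun s => \matrix_(i, j) limn (pseries (expmx_coef A i j) s))).
  by move=> s; rewrite expmxE.
apply/is_derive_mxP => i j.
apply: (@is_derive_ext _ _ (fun s => limn (pseries (expmx_coef A i j) s))).
  by move=> s; rewrite mxE.
have nA_ge0 : 0 <= n%:R * `|A| by rewrite mulr_ge0.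
have /is_derive_eq := is_derive_pseries_exp_dominated t ler01 nA_ge0
  (@expmx_coef_exp_dominated A i j); apply.
rewrite expmxE mxE.
suff -> : pseries_diffs (expmx_coef A i j) =
    fun k => \sum_l A i l * expmx_coef A l j k.
  rewrite lim_pseries_lincomb; last by move=> l; exact: cvg_pseries_expmx_coef.
  by apply: eq_bigr => l _; rewrite mxE.
apply/funext => k.
have /(congr1 (fun f => f k)) := @pseries_diffs_inv_fact R.
rewrite /pseries_diffs /= => hf.
rewrite /pseries_diffs /expmx_coef exprS -mulmxE mxE mulrA hf mulr_sumr.
by apply: eq_bigr => l _; rewrite mulrCA.
Qed.

Lemma continuous_expmx A : continuous (fun s : R => expmx (s *: A)).
Proof.
move=> x; apply: differentiable_continuous; apply/derivable1_diffP.
by case: (is_derive_expmx A x).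
Qed.

End matrix_exponential.

Section linear_odes.
Context {R : realType}.
Implicit Types (t T : R).

Lemma continuous_within_expmx n (A : set R) (M : 'M[R]_n) :
  {within A, continuous (fun s => expmx (s *: M))}.
Proof. exact/continuous_subspaceT/continuous_expmx. Qed.

Lemma expmx_mulmxN n (A : 'M[R]_n) t :
  0 <= t -> expmx (t *: A) *m expmx (t *: - A) = 1%:M.
Proof.
move=> t0; have t_itv : 0 <= t <= t by rewrite t0 lexx.
rewrite (is_derive0_itv_cst (F := fun s => expmx (s *: A) *m expmx (s *: - A))
  _ _ t_itv).
- by rewrite !expmx0 mul1mx.
- by move=> x; apply: cvg_mulmx; apply: continuous_within_expmx.
move=> s _; have := is_derive_mulmx (is_derive_expmx A s) (is_derive_expmx (- A) s).
by move=> /is_derive_eq; apply; rewrite mulNmx mulmxN mulmxA expmx_commute // subrr.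
Qed.

Lemma solves_on_linearE n q (A : 'M[R]_n) (F : R -> 'M[R]_(n, q)) T :
  solves_on T F (fun t => A *m F t) ->
  forall t, 0 <= t <= T -> F t = expmx (t *: A) *m F 0.
Proof.
move=> [cF dF] t t_itv.
have <- : expmx (t *: - A) *m F t = F 0.
  rewrite (is_derive0_itv_cst (F := fun s => expmx (s *: - A) *m F s) _ _ t_itv).
  - by rewrite expmx0 mul1mx.
  - by move=> x; apply: cvg_mulmx; [apply: continuous_within_expmx | exact: cF].
  move=> s s_itv; have := is_derive_mulmx (is_derive_expmx (- A) s) (dF s s_itv).
  move=> /is_derive_eq; apply.
  by rewrite !mulNmx mulmxA expmx_commute ?addNr // mulNmx mulmxN.
by rewrite mulmxA expmx_mulmxN ?mul1mx //; case/andP: t_itv.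
Qed.

Lemma primitive_flow_mulmx T n p (A : 'M[R]_n) (X : R -> 'M[R]_n)
    (Y : R -> 'M[R]_(n, p)) (C : 'M[R]_(n, p)) :
  solves_on T X (fun t => A *m X t) -> X 0 = 1%:M ->
  solves_on T Y (fun t => X t *m C) -> Y 0 = 0 ->
  forall t, 0 <= t <= T -> A *m Y t + C = X t *m C.
Proof.
move=> [cX dX] X0 [cY dY] Y0 t t_itv; apply/eqP; rewrite -subr_eq0; apply/eqP.
rewrite (is_derive0_itv_cst (F := fun s => A *m Y s + C - X s *m C) _ _ t_itv).
- by rewrite X0 Y0 mulmx0 add0r mul1mx subrr.
- move=> x; apply: cvgB; last by apply: cvg_mulmx; [exact: cX | exact: cvg_cst].
  by apply: cvgD; [apply: cvg_mulmx; [exact: cvg_cst | exact: cY] | exact: cvg_cst].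
move=> s s_itv.
have dAY := is_derive_mulmx (is_derive_cst A s 1) (dY s s_itv).
have dXC := is_derive_mulmx (dX s s_itv) (is_derive_cst C s 1).
have /is_derive_eq := is_deriveB (is_deriveD dAY (is_derive_cst C s 1)) dXC; apply.
by rewrite mul0mx add0r mulmx0 !addr0 mulmxA subrr.
Qed.

Lemma is_derive_expR_scale (c t : R) :
  is_derive t 1 (fun s => expR (- (c * s))) (- c * expR (- (c * t))).
Proof.
have dcs : is_derive t 1 (fun s : R => - (c * s)) (- c).
  have := is_deriveN (is_deriveZ c (is_derive_id t (1 : R))).
  by rewrite /GRing.scale /= mulr1.
have /is_derive_eq := is_derive1_comp (is_derive_expR _) dcs; apply.
by rewrite mulrC.
Qed.

Lemma solves_on_expR_scale T n q (M : 'M[R]_n) (F : R -> 'M[R]_(n, q)) c :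
  solves_on T F (fun t => M *m F t) ->
  solves_on T (fun t => expR (- (c * t)) *: F t)
    (fun t => (M - c%:M) *m (expR (- (c * t)) *: F t)).
Proof.
have cexp : continuous (fun s : R => expR (- (c * s))).
  move=> x; apply: differentiable_continuous; apply/derivable1_diffP.
  by case: (is_derive_expR_scale c x).
move=> [cF dF]; split=> [x|t t_itv].
  by apply: cvgZ; [exact: continuous_subspaceT | exact: cF].
have := is_derive_scale_fun (is_derive_expR_scale c t) (dF t t_itv).
move=> /is_derive_eq; apply.
by rewrite mulmxBl mul_scalar_mx -scalemxAr scalerA mulNr scaleNr addrC.
Qed.

End linear_odes.

Section discretization.
Context {R : realType} {nx nut : nat}.
Variables (Ac V : 'M[R]_nx) (B1 B2 : 'M[R]_(nx, nut)) (Ts : R).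
Variables (Af Avf : R -> 'M[R]_nx) (B1f B2f : R -> 'M[R]_(nx, nut)).
Hypotheses (sAf : solves_on Ts Af (fun t => Ac *m Af t)) (Af0 : Af 0 = 1%:M).
Hypotheses (sAvf : solves_on Ts Avf (fun t => (V *m Ac) *m Avf t))
  (Avf0 : Avf 0 = 1%:M).
Hypotheses (sB1f : solves_on Ts B1f (fun t => Af t *m B1)) (B1f0 : B1f 0 = 0).
Hypotheses (sB2f : solves_on Ts B2f (fun t => Avf t *m (V *m (B2 - B1))))
  (B2f0 : B2f 0 = 0).

Definition Hc_flow (t : R) : 'M[R]_((nx + nut) + (nx + nut) + (nx + nut)) :=
  block_mx (block_mx (block_mx (Af t) (B1f t) 0 1%:M) 0
                      0 (block_mx (Avf t) (B2f t) 0 1%:M)) 0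
           0 (block_mx (Avf t) 0 0 1%:M).

Lemma Hc_flow0 : Hc_flow 0 = 1%:M.
Proof. by rewrite /Hc_flow Af0 B1f0 Avf0 B2f0 -!scalar_mx_block. Qed.

Lemma solves_on_Hc_flow :
  solves_on Ts Hc_flow (fun t => Hc Ac V B1 B2 *m Hc_flow t).
Proof.
have [cAf dAf] := sAf; have [cAvf dAvf] := sAvf.
have [cB1f dB1f] := sB1f; have [cB2f dB2f] := sB2f.
split=> [x|t t_itv].
  by do !apply: cvg_block_mx;
    solve [exact: cvg_cst | exact: cAf | exact: cAvf | exact: cB1f | exact: cB2f].
have t_itv' : 0 <= t <= Ts by case/andP: t_itv => /ltW -> /ltW ->.
have AB1 := primitive_flow_mulmx sAf Af0 sB1f B1f0 t_itv'.
have AB2 := primitive_flow_mulmx sAvf Avf0 sB2f B2f0 t_itv'.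
have /is_derive_eq : is_derive t 1 Hc_flow
    (block_mx
      (block_mx (block_mx (Ac *m Af t) (Af t *m B1) 0 0) 0
                0 (block_mx (V *m Ac *m Avf t) (Avf t *m (V *m (B2 - B1))) 0 0)) 0
      0 (block_mx (V *m Ac *m Avf t) 0 0 0)).
  by do !apply: is_derive_block_mx; solve [exact: is_derive_cst | exact: dAf
    | exact: dAvf | exact: dB1f | exact: dB2f].
apply; rewrite /Hc /H1c /H2c /H3c /Hc_flow.
by rewrite !mulmx_block !mulmx0 !mul0mx !addr0 !add0r !mulmx1 AB1 AB2.
Qed.

Lemma E1_Hc_flow_E2 t :
  E1 R nx nut *m Hc_flow t *m E2 R nx nut = block_mx (Af t) (B1f t + B2f t) 0 1%:M.
Proof.
rewrite /E1 /E2 /Hc_flow !mul_row_block !mulmx0 !addr0 !mul1mx !add0r.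
rewrite !mul_row_col !mulmx1 mulNmx mul1mx add_block_mx opp_block_mx add_block_mx.
by rewrite addrK !oppr0 !addr0 addrK.
Qed.

Lemma Af_expmx t : 0 <= t <= Ts -> Af t = expmx (t *: Ac).
Proof. by move=> t_itv; rewrite (solves_on_linearE sAf t_itv) Af0 mulmx1. Qed.

Lemma Avf_expmx t : 0 <= t <= Ts -> Avf t = expmx (t *: (V *m Ac)).
Proof. by move=> t_itv; rewrite (solves_on_linearE sAvf t_itv) Avf0 mulmx1. Qed.

Lemma B1f_mxint t :
  0 <= t <= Ts -> B1f t = mxint (fun s => expmx (s *: Ac) *m B1) 0 t.
Proof.
move=> /[dup] t_itv /andP[_ tTs]; have [cAf _] := sAf.
rewrite (solves_onE sB1f _ t_itv) ?B1f0 ?add0r; last first.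
  by move=> x; apply: cvg_mulmx (cAf x) (cvg_cst _).
by apply: eq_mxint => s /andP[s0 st]; rewrite Af_expmx // s0 (le_trans st).
Qed.

Hypothesis VAc : V *m Ac = Ac *m V.

Lemma B2f_mxint t : 0 <= t <= Ts ->
  B2f t = V *m mxint (fun s => expmx (s *: (V *m Ac)) *m (B2 - B1)) 0 t.
Proof.
move=> /[dup] t_itv /andP[_ tTs]; have [cAvf _] := sAvf.
rewrite (solves_onE sB2f _ t_itv) ?B2f0 ?add0r; last first.
  by move=> x; apply: cvg_mulmx (cAvf x) (cvg_cst _).
rewrite -mxint_mulmxl; last first.
  by move=> x; apply: cvg_mulmx; [exact: continuous_within_expmx | exact: cvg_cst].
apply: eq_mxint => s /andP[s0 st]; rewrite Avf_expmx ?s0 ?(le_trans st) //.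
by rewrite mulmxA expmx_commute -?mulmxA // VAc.
Qed.

Lemma Gam_block t :
  0 <= t <= Ts -> Gam Ac V B1 B2 t = block_mx (Af t) (B1f t + B2f t) 0 1%:M.
Proof. by move=> t_itv; rewrite /Gam /Bo_s Af_expmx // B1f_mxint // B2f_mxint. Qed.

Lemma E1_flow_E2 c (H : R -> 'M[R]_((nx + nut) + (nx + nut) + (nx + nut))) :
  solves_on Ts H (fun t => (Hc Ac V B1 B2 - c%:M) *m H t) -> H 0 = 1%:M ->
  forall t, 0 <= t <= Ts ->
  E1 R nx nut *m H t *m E2 R nx nut = expR (- (c * t)) *: Gam Ac V B1 B2 t.
Proof.
move=> sH H0 t t_itv.
have /= := solves_on_linearE (solves_on_expR_scale c solves_on_Hc_flow) t_itv.
rewrite mulr0 oppr0 expR0 scale1r Hc_flow0 => Psi_t.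
rewrite (solves_on_linearE sH t_itv) H0 -Psi_t -scalemxAr -scalemxAl.
by rewrite E1_Hc_flow_E2 Gam_block.
Qed.

End discretization.

Lemma V_of_Ac_of_comm {R : realType} (K : nat) (n : 'I_K -> nat)
    (Acb : forall k, 'M[R]_(n k)) (v : 'I_K -> R) :
  V_of n v *m Ac_of Acb = Ac_of Acb *m V_of n v.
Proof.
rewrite /V_of /Ac_of [\mxdiag_(k < K) Acb k]/mxdiag.
rewrite mul_mxdiag_mxblock mul_mxblock_mxdiag; apply: eq_mxblock => i j.
by rewrite mul_scalar_mx mul_mx_scalar; case: eqP => [<-|_]; rewrite ?scaler0.
Qed.

Theorem proposition2 (R : realType) (nz nu : nat)
  (n : 'I_(nz * nu) -> nat)
  (Acb : forall k, 'M[R]_(n k)) (Bc : forall k, 'cV[R]_(n k))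
  (Cc : forall k, 'rV[R]_(n k)) (Dc : 'I_(nz * nu) -> R)
  (tau : 'I_(nz * nu) -> R) (Ts : R) (m : 'I_(nz * nu) -> nat) (v : 'I_(nz * nu) -> R)
  (Qc : 'M[R]_nz) (mu : R)
  (Af Avf : R -> 'M[R]_(\sum_(k < nz * nu) n k))
  (B1f B2f : R -> 'M[R]_(\sum_(k < nz * nu) n k, (mbar_of m).+1 * nu))
  (Hqf Hmf : R -> 'M[R]_(
      ((\sum_(k < nz * nu) n k) + (mbar_of m).+1 * nu)
    + ((\sum_(k < nz * nu) n k) + (mbar_of m).+1 * nu)
    + ((\sum_(k < nz * nu) n k) + (mbar_of m).+1 * nu)))
  (Qf : R -> 'M[R]_((\sum_(k < nz * nu) n k) + (mbar_of m).+1 * nu))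
  (Mf : R -> 'M[R]_((\sum_(k < nz * nu) n k) + (mbar_of m).+1 * nu, nz)) :
  (forall k, 0 <= tau k) ->
  0 < Ts ->
  (forall k, tau k / Ts = (m k)%:R - v k /\ 0 <= v k < 1) ->
  Qc^T = Qc ->
  (forall x : 'cV[R]_nz, 0 <= (x^T *m Qc *m x) ord0 ord0) ->
  0 < mu ->
  let Ac := Ac_of Acb in
  let V := V_of n v in
  let B1 := B1c_of Bc m in
  let B2 := B2c_of Bc m in
  let Ccm := Cc_of Cc in
  let Do := Do_of Dc m in
  let B2bar := V *m (B2 - B1) in
  let Hcq := Hc Ac V B1 B2 - (mu / 2)%:M in
  let Hcm := Hc Ac V B1 B2 - mu%:M in
  let Gq := fun t => E1 R _ _ *m Hqf t *m E2 R _ _ in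
  let Gm := fun t => E1 R _ _ *m Hmf t *m E2 R _ _ in
  let Mbar := Mbarc Ccm Do Qc in
  let Qbar := Qbarc Ccm Do Qc in
  solves_on Ts Af (fun t => Ac *m Af t) -> Af 0 = 1%:M ->
  solves_on Ts Avf (fun t => (V *m Ac) *m Avf t) -> Avf 0 = 1%:M ->
  solves_on Ts B1f (fun t => Af t *m B1) -> B1f 0 = 0 ->
  solves_on Ts B2f (fun t => Avf t *m B2bar) -> B2f 0 = 0 ->
  solves_on Ts Hqf (fun t => Hcq *m Hqf t) -> Hqf 0 = 1%:M ->
  solves_on Ts Hmf (fun t => Hcm *m Hmf t) -> Hmf 0 = 1%:M ->
  solves_on Ts Qf (fun t => (Gq t)^T *m Qbar *m Gq t) -> Qf 0 = 0 ->
  solves_on Ts Mf (fun t => (Gm t)^T *m Mbar) -> Mf 0 = 0 ->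
  [/\ Af Ts = expmx (Ts *: Ac),
      B1f Ts + B2f Ts =
        mxint (fun t => expmx (t *: Ac) *m B1) 0 Ts
        + V *m mxint (fun t => expmx (t *: (V *m Ac)) *m (B2 - B1)) 0 Ts,
      Qf Ts = mxint (fun s => expR (- (mu * s)) *:
                 ((Gam Ac V B1 B2 s)^T *m Qbar *m Gam Ac V B1 B2 s)) 0 Ts
    & Mf Ts = mxint (fun s => expR (- (mu * s)) *:
                 ((Gam Ac V B1 B2 s)^T *m Mbar)) 0 Ts].
Proof.
move=> _ Ts_gt0 _ _ _ _ Ac V B1 B2 Ccm Do B2bar Hcq Hcm Gq Gm Mbar Qbar
  sAf Af0 sAvf Avf0 sB1f B1f0 sB2f B2f0 sHq Hq0 sHm Hm0 sQf Qf0 sMf Mf0.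
have Ts_itv : 0 <= Ts <= Ts by rewrite lexx ltW.
have VAc := V_of_Ac_of_comm Acb v.
have E1_E2 := E1_flow_E2 sAf Af0 sAvf Avf0 sB1f B1f0 sB2f B2f0 VAc.
have cGq : {within `[0, Ts], continuous Gq}.
  by move=> x; apply: cvg_mulmx (cvg_mulmx (cvg_cst _) (sHq.1 x)) (cvg_cst _).
have cGm : {within `[0, Ts], continuous Gm}.
  by move=> x; apply: cvg_mulmx (cvg_mulmx (cvg_cst _) (sHm.1 x)) (cvg_cst _).
split.
- exact: Af_expmx sAf Af0 _ Ts_itv.
- by rewrite (B1f_mxint sAf Af0 sB1f B1f0) // (B2f_mxint sAvf Avf0 sB2f B2f0).
- rewrite (solves_onE sQf _ Ts_itv) ?Qf0 ?add0r; last first.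
    move=> x; apply: cvg_mulmx (cGq x).
    by apply: cvg_mulmx; [exact: cvg_trmx (cGq x) | exact: cvg_cst].
  apply: eq_mxint => s s_itv; rewrite /Gq (E1_E2 _ _ sHq Hq0) //.
  rewrite [(_ *: _)^T]linearZ -!scalemxAl -scalemxAr scalerA -expRD.
  by rewrite -opprD -mulrDl -splitr.
- rewrite (solves_onE sMf _ Ts_itv) ?Mf0 ?add0r; last first.
    by move=> x; apply: cvg_mulmx (cvg_trmx (cGm x)) (cvg_cst _).
  apply: eq_mxint => s s_itv; rewrite /Gm (E1_E2 _ _ sHm Hm0) //.
  by rewrite [(_ *: _)^T]linearZ -scalemxAl.
Qed.
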